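(* Fix thresholds $minUtil\in\mathbb{R}$ and $minPro\in\mathbb{R}$. Let $P\subseteq I$ be an itemset and let $y,z\in I\setminus P$ be items with $y$ coming before $z$ in the processing order, each coming after every item of $P$. Set $Y=P\cup\{y\}$ and $Z=P\cup\{z\}$, so $Y\cup Z=P\cup\{y,z\}$. Suppose that either $$\text{(1)}\quad SUM(Y.pu)+SUM(Y.rpu)-\sum_{T_c\in D,\ Y\subseteq T_c,\ Z\not\subseteq T_c}\big(pu(Y,T_c)+rpu(Y,T_c)\big) < minUtil,$$ or $$\text{(2)}\quad SUM(Y.pro)-\sum_{T_c\in D,\ Y\subseteq T_c,\ Z\not\subseteq T_c} pro(Y,T_c) < minPro\cdot|D|.$$ Then neither $Y\cup Z$ nor any descendant of $Y\cup Z$ in the set-enumeration tree is a PHUI.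
   Context: Let $I$ be a finite set of items. An uncertain database $D=\{T_1,\dots,T_n\}$ is a finite collection of transactions with $|D|=n$ and each $T_c\subseteq I$. Each item $i\in T_c$ has a quantity $q(i,T_c)>0$ and a probability $p(i,T_c)\in(0,1]$. Each item $i\in I$ has an external utility $pr(i)\in\mathbb{R}$, which may be negative. Basic quantities: - $u(i,T_c)=pr(i)\,q(i,T_c)$. - For $X\subseteq T_c$: $u(X,T_c)=\sum_{i\in X}u(i,T_c)$ and $p(X,T_c)=\prod_{i\in X}p(i,T_c)$. - $u(X)=\sum_{T_c\in D,\ X\subseteq T_c}u(X,T_c)$ and $Pro(X)=\sum_{T_c\in D,\ X\subseteq T_c}p(X,T_c)$. An itemset $X$ is a potential high-utility itemset (PHUI) if $u(X)\ge minUtil$ and $Pro(X)\ge minPro\cdot|D|$. Fix a total processing order on $I$. The paper sorts items by ascending $RTWU$ and places all items with negative external utility after the positive ones. Here $RTWU(X)=\sum_{T_c\supseteq X}\sum_{i\in T_c,\ pr(i)>0}u(i,T_c)$. The set-enumeration tree has root $\emptyset$. The children of a node $X$ are the sets $X\cup\{i\}$ with $i$ after every item of $X$. Thus the descendants of $X$ are the itemsets $W\supsetneq X$ such that every item of $W\setminus X$ comes after every item of $X$. For $X\subseteq T_c$ define: - $pro(X,T_c)=p(X,T_c)$; - $pu(X,T_c)=\sum_{i\in X,\ pr(i)>0}u(i,T_c)$; - $nu(X,T_c)=\sum_{i\in X,\ pr(i)<0}u(i,T_c)$; - $rpu(X,T_c)=\sum u(i,T_c)$ over $i\in T_c$ with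 $pr(i)>0$ and $i$ after every item of $X$. For $\ast\in\{pro,pu,nu,rpu\}$ let $SUM(X.\ast)=\sum_{T_c\in D,\ X\subseteq T_c}\ast(X,T_c)$. *)

From HB Require Import structures.
From mathcomp Require Import all_boot all_order all_algebra.
Set Implicit Arguments. Unset Strict Implicit. Unset Printing Implicit Defensive.
Import Order.TTheory GRing.Theory Num.Theory.
Local Open Scope ring_scope.

(* An uncertain database over item type I with values in R:
   |D| = dbsize, transactions indexed by 'I_dbsize (a multiset of transactions),
   item set of T_c is items c, quantity q(i,T_c) = qty c i,
   probability p(i,T_c) = prob c i. *)
Record udb (R : realFieldType) (I : finType) := UDB {
  dbsize : nat;
  items : 'I_dbsize -> {set I};
  qty : 'I_dbsize -> I -> R;
  prob : 'I_dbsize -> I -> R }.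
Arguments dbsize {R I} _.
Arguments items {R I} _ _.
Arguments qty {R I} _ _ _.
Arguments prob {R I} _ _ _.

Section Defs.
Variables (R : realFieldType) (I : finType).
Variable (D : udb R I).
Variable (pr : I -> R).
Variable (rk : I -> nat).    (* processing order: i before j iff rk i < rk j *)

Definition valid_db : Prop :=
  forall (c : 'I_(dbsize D)) (i : I), i \in items D c ->
    0 < qty D c i /\ 0 < prob D c i <= 1.

Definition utl (i : I) (c : 'I_(dbsize D)) : R := pr i * qty D c i.
Definition utlX (X : {set I}) c : R := \sum_(i in X) utl i c.
Definition probX (X : {set I}) c : R := \prod_(i in X) prob D c i.

Definition utility (X : {set I}) : R :=
  \sum_(c : 'I_(dbsize D) | X \subset items D c) utlX X c.
Definition Pro (X : {set I}) : R :=
  \sum_(c : 'I_(dbsize D) | X \subset items D c) probX X c.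

Definition PHUI (minUtil minPro : R) (X : {set I}) : Prop :=
  minUtil <= utility X /\ minPro * (dbsize D)%:R <= Pro X.

Definition after (X : {set I}) (i : I) : bool := [forall j in X, (rk j < rk i)%N].

Definition descendant (X W : {set I}) : bool :=
  (X \proper W) && [forall i in W :\: X, after X i].

Definition pro (X : {set I}) c : R := probX X c.
Definition pu (X : {set I}) c : R := \sum_(i in X | 0 < pr i) utl i c.
Definition nu (X : {set I}) c : R := \sum_(i in X | pr i < 0) utl i c.
Definition rpu (X : {set I}) c : R :=
  \sum_(i in items D c | (0 < pr i) && after X i) utl i c.

Definition SUM (f : {set I} -> 'I_(dbsize D) -> R) (X : {set I}) : R :=
  \sum_(c : 'I_(dbsize D) | X \subset items D c) f X c.

End Defs.

Arguments valid_db {R I} D.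
Arguments utl {R I} D pr i c.
Arguments utlX {R I} D pr X c.
Arguments probX {R I} D X c.
Arguments utility {R I} D pr X.
Arguments Pro {R I} D X.
Arguments PHUI {R I} D pr minUtil minPro X.
Arguments after {I} rk X i.
Arguments descendant {I} rk X W.
Arguments pro {R I} D X c.
Arguments pu {R I} D pr X c.
Arguments nu {R I} D pr X c.
Arguments rpu {R I} D pr rk X c.
Arguments SUM {R I} D f X.

From mathcomp Require Import all_boot all_order all_algebra.
Set Implicit Arguments. Unset Strict Implicit. Unset Printing Implicit Defensive.
Import Order.TTheory GRing.Theory Num.Theory.
Local Open Scope ring_scope.

(* Since Y ∪ Z = Y ∪ {z} with z after Y, every node W of the subtree rooted at
   Y ∪ Z lies in the subtree rooted at Y: the items of W outside Y come after Y.
   In a transaction containing W (hence Y and Z) the utility of W is therefore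
   at most pu(Y) + rpu(Y), negative utilities only decreasing it, and its
   probability is at most that of Y, all factors lying in [0,1].  Summing over
   these transactions bounds u(W) and Pro(W) by the left-hand sides of (1) and
   (2), where the terms of the transactions not containing Z cancel. *)

Lemma ler_sum_subpred (R : numDomainType) (T : finType) (P Q : pred T)
    (F : T -> R) :
  (forall i, P i -> Q i) -> (forall i, Q i -> ~~ P i -> 0 <= F i) ->
  \sum_(i | P i) F i <= \sum_(i | Q i) F i.
Proof.
move=> sPQ F0; rewrite [X in _ <= X](bigID P) /=.
rewrite (eq_bigl P) => [|i]; last by case Pi: (P i); rewrite ?andbF ?andbT ?sPQ.
by rewrite lerDl sumr_ge0 // => i /andP[]; exact: F0.
Qed.

Lemma ler_prod_subset (R : numDomainType) (T : finType) (A B : {set T})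
    (F : T -> R) :
  A \subset B -> (forall i, i \in B -> 0 <= F i <= 1) ->
  \prod_(i in B) F i <= \prod_(i in A) F i.
Proof.
move=> sAB F01; rewrite (big_setID A) /= (setIidPr sAB).
apply: ler_piMr; first by apply: prodr_ge0 => i /(subsetP sAB) /F01 /andP[].
by apply: prodr_ile1 => i /setDP[/F01].
Qed.

Section SubtreeOrder.
Variables (I : finType) (rk : I -> nat).

Definition in_subtree (X W : {set I}) : bool :=
  (X \subset W) && [forall i in W :\: X, after rk X i].

Lemma in_subtreeP (X W : {set I}) :
  reflect (X \subset W /\ forall i, i \in W -> i \notin X -> after rk X i)
          (in_subtree X W).
Proof.
apply: (iffP andP) => -[sXW aW]; split=> //.
  by move=> i iW iX; move/forall_inP: aW; apply; rewrite inE iX.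
by apply/forall_inP => i /setDP[iW iX]; exact: aW.
Qed.

Lemma in_subtree_sub (X W : {set I}) : in_subtree X W -> X \subset W.
Proof. by case/andP. Qed.

Lemma in_subtree_refl_or_descendant (X W : {set I}) :
  W = X \/ descendant rk X W -> in_subtree X W.
Proof.
case=> [->|/andP[/proper_sub sXW aW]]; last by rewrite /in_subtree sXW.
by apply/in_subtreeP; split=> // i ->.
Qed.

Lemma after_sub (X X' : {set I}) (i : I) :
  X \subset X' -> after rk X' i -> after rk X i.
Proof.
by move=> sXX' /forall_inP aX'; apply/forall_inP => j /(subsetP sXX'); exact: aX'.
Qed.

Lemma after_setU1 (y : I) (X : {set I}) (i : I) :
  after rk (y |: X) i = (rk y < rk i)%N && after rk X i.
Proof.
apply/forall_inP/andP => [a | [ryi /forall_inP aX] j].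
  split; first by apply: a; rewrite setU11.
  by apply/forall_inP => j jX; apply: a; rewrite setU1r.
by case/setU1P => [->|]; [exact: ryi | exact: aX].
Qed.

Lemma in_subtree_setU1 (X : {set I}) (z : I) :
  after rk X z -> in_subtree X (z |: X).
Proof.
move=> aXz; apply/in_subtreeP; split=> [|i]; first exact: subsetUr.
by case/setU1P => [->|->].
Qed.

Lemma in_subtree_trans (X X' W : {set I}) :
  in_subtree X X' -> in_subtree X' W -> in_subtree X W.
Proof.
move=> /in_subtreeP[sXX' aX'] /in_subtreeP[sX'W aW]; apply/in_subtreeP.
split=> [|i iW iX]; first exact: subset_trans sX'W.
case: (boolP (i \in X')) => [iX'|iX']; first exact: aX'.
exact: after_sub sXX' (aW i iW iX').
Qed.

End SubtreeOrder.

Section Bounds.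
Variables (R : realFieldType) (I : finType) (D : udb R I).
Variables (pr : I -> R) (rk : I -> nat).
Hypothesis validD : valid_db D.

Lemma utl_ge0 c i : i \in items D c -> 0 <= pr i -> 0 <= utl D pr i c.
Proof. by move=> ic pr0; have [q0 _] := validD ic; rewrite /utl mulr_ge0 // ltW. Qed.

Lemma utl_le0 c i : i \in items D c -> pr i <= 0 -> utl D pr i c <= 0.
Proof. by move=> ic pr0; have [q0 _] := validD ic; rewrite /utl mulr_le0_ge0 // ltW. Qed.

Lemma pu_rpu_ge0 (X : {set I}) c :
  X \subset items D c -> 0 <= pu D pr X c + rpu D pr rk X c.
Proof.
move=> sX; apply: addr_ge0; apply: sumr_ge0 => i.
  by case/andP=> iX /ltW; apply: utl_ge0; exact: (subsetP sX).
by case/and3P=> ic /ltW pr0 _; exact: utl_ge0.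
Qed.

Lemma utlX_le_pu_rpu (X W : {set I}) c :
  in_subtree rk X W -> W \subset items D c ->
  utlX D pr W c <= pu D pr X c + rpu D pr rk X c.
Proof.
move=> /in_subtreeP[sXW aW] sW.
have Wc i : i \in W -> i \in items D c by apply: (subsetP sW).
have drop_neg : utlX D pr W c <= \sum_(i in W | 0 < pr i) utl D pr i c.
  rewrite /utlX (bigID (fun i => 0 < pr i)) /= gerDl.
  by apply: sumr_le0 => i /andP[/Wc ic]; rewrite -leNgt; exact: utl_le0.
apply: (le_trans drop_neg); rewrite (big_setIDcond _ W X) /= (setIidPr sXW) lerD2l.
apply: ler_sum_subpred => [i /andP[/setDP[iW iX] ->]|i /and3P[ic /ltW pr0 _] _].
  by rewrite Wc //= aW.
exact: utl_ge0.
Qed.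

Lemma probX_le_subset (X W : {set I}) c :
  X \subset W -> W \subset items D c -> probX D W c <= probX D X c.
Proof.
move=> sXW sW; apply: ler_prod_subset => // i /(subsetP sW) /validD[_ /andP[p0 ->]].
by rewrite ltW.
Qed.

Lemma utility_le_sum_pu_rpu (X W : {set I}) (Q : pred 'I_(dbsize D)) :
  in_subtree rk X W -> (forall c, W \subset items D c -> Q c) ->
  (forall c, Q c -> X \subset items D c) ->
  utility D pr W <= \sum_(c | Q c) (pu D pr X c + rpu D pr rk X c).
Proof.
move=> XW WQ QX; apply: le_trans (ler_sum_subpred _ _) => [||c /QX sX _].
- by apply: ler_sum => c; exact: utlX_le_pu_rpu.
- exact: WQ.
- exact: pu_rpu_ge0.
Qed.

Lemma Pro_le_sum_pro (X W : {set I}) (Q : pred 'I_(dbsize D)) :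
  X \subset W -> (forall c, W \subset items D c -> Q c) ->
  (forall c, Q c -> X \subset items D c) ->
  Pro D W <= \sum_(c | Q c) pro D X c.
Proof.
move=> sXW WQ QX; apply: le_trans (ler_sum_subpred _ _) => [||c /QX sX _].
- by apply: ler_sum => c; exact: probX_le_subset.
- exact: WQ.
- by apply: prodr_ge0 => i /(subsetP sX) /validD[_ /andP[/ltW]].
Qed.

End Bounds.

Theorem lemma1 (R : realFieldType) (I : finType) (D : udb R I)
  (pr : I -> R) (rk : I -> nat) (minUtil minPro : R)
  (P : {set I}) (y z : I) :
  valid_db D ->
  injective rk ->
  y \notin P -> z \notin P ->
  (rk y < rk z)%N ->
  after rk P y -> after rk P z ->
  let Y := y |: P in
  let Z := z |: P in
  (SUM D (pu D pr) Y + SUM D (rpu D pr rk) Y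
     - \sum_(c : 'I_(dbsize D) | (Y \subset items D c) && ~~ (Z \subset items D c))
         (pu D pr Y c + rpu D pr rk Y c) < minUtil
   \/
   SUM D (pro D) Y
     - \sum_(c : 'I_(dbsize D) | (Y \subset items D c) && ~~ (Z \subset items D c))
         pro D Y c < minPro * (dbsize D)%:R) ->
  forall W : {set I}, W = Y :|: Z \/ descendant rk (Y :|: Z) W ->
    ~ PHUI D pr minUtil minPro W.
Proof.
move=> validD _ _ _ ryz _ aPz Y Z small W /in_subtree_refl_or_descendant YZW [uW pW].
have YZ_eq : Y :|: Z = z |: Y.
  by apply/setP => i; rewrite !inE; case: (i == y); case: (i == z); case: (i \in P).
have YW : in_subtree rk Y W.
  apply: in_subtree_trans YZW; rewrite YZ_eq; apply: in_subtree_setU1.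
  by rewrite after_setU1 ryz.
have WYZ c : W \subset items D c -> (Y \subset items D c) && (Z \subset items D c).
  by move/(subset_trans (in_subtree_sub YZW)); rewrite subUset.
have YZY c : (Y \subset items D c) && (Z \subset items D c) -> Y \subset items D c.
  by case/andP.
have dropZ (F : 'I_(dbsize D) -> R) :
    \sum_(c | Y \subset items D c) F c
      - \sum_(c | (Y \subset items D c) && ~~ (Z \subset items D c)) F c
    = \sum_(c | (Y \subset items D c) && (Z \subset items D c)) F c.
  by rewrite (bigID (fun c => Z \subset items D c)) /= addrK.
case: small => [|]; rewrite /SUM -?big_split /= dropZ => small.
- have := le_trans uW (utility_le_sum_pu_rpu pr validD YW WYZ YZY).
  by move/le_lt_trans/(_ small); rewrite ltxx.
- have := le_trans pW (Pro_le_sum_pro validD (in_subtree_sub YW) WYZ YZY).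
  by move/le_lt_trans/(_ small); rewrite ltxx.
Qed.
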